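(* Let $M$ be a multiset of $m$ elements distributed over $p'$ PEs such that each PE holds $\bar m=m/p'$ elements which are pairwise distinct on that PE. Each distinct element $e$ of $M$ is assigned independently and uniformly at random to one of the $p'$ PEs, and every occurrence of $e$ is sent to that PE. Let $X$ be the maximum number of elements (counted with multiplicity) received by a PE. For $k\ge1$ and $\bar m=\omega(k^2p'\log p)$ with $p\ge p'$, we have $\Pr[X>\bar m(1+1/k)]\le 1/p^{\omega(1)}$.
   Context: Asymptotic notation is with respect to $p\to\infty$. *)

From HB Require Import structures.
From mathcomp Require Import all_boot all_order all_algebra.
From mathcomp Require Import reals exp.
Set Implicit Arguments. Unset Strict Implicit. Unset Printing Implicit Defensive.
Import Order.TTheory GRing.Theory Num.Theory.
Local Open Scope ring_scope.

(* PE i holds the set [S i] of (pairwise distinct)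
   elements of the universe T.  A random assignment is h : {ffun T -> 'I_p'};
   every occurrence of element e is sent to PE (h e). *)

Definition load (p' : nat) (T : finType) (S : 'I_p' -> {set T})
  (h : {ffun T -> 'I_p'}) (j : 'I_p') : nat :=
  (\sum_(i < p') #|[set e in S i | h e == j]|)%N.

Definition maxload (p' : nat) (T : finType) (S : 'I_p' -> {set T})
  (h : {ffun T -> 'I_p'}) : nat :=
  (\max_(j < p') load S h j)%N.

(* Pr[X > mbar (1 + 1/k)] where h is uniform over all functions T -> 'I_p'
   (i.e. each element independently and uniformly assigned to a PE). *)
Definition overload_prob (R : realType) (p' : nat) (T : finType)
  (S : 'I_p' -> {set T}) (mbar : nat) (k : R) : R :=
  (#|[set h : {ffun T -> 'I_p'} |
        mbar%:R * (1 + k^-1) < (maxload S h)%:R]|)%:R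
  / (#|{ffun T -> 'I_p'}|)%:R.

From HB Require Import structures.
From mathcomp Require Import all_boot all_order all_algebra.
From mathcomp Require Import reals exp sequences.
From mathcomp Require Import ring lra.
Import Order.TTheory GRing.Theory Num.Theory.
Set Implicit Arguments. Unset Strict Implicit.
Local Open Scope ring_scope.

(** Exponential Markov inequality with [l = 1/(4kp')] for every PE, and a
    union bound over the [p'] PEs.  Since each distinct element picks its PE
    independently, the moment generating function of a load factorizes over
    the elements [e], with factor [((p'-1) + exp(l c_e)) / p'] where
    [c_e <= p'] is the multiplicity of [e].  From [exp y <= 1 + y + 2y^2] for
    [0 <= y <= 1/2] each factor is at most [exp(l c_e (1 + 2lp') / p')], and
    the multiplicities sum to [p' mbar].  The exponent of the resulting tail
    bound is [-mbar / (8 k^2 p')], which is at most [-(C+1) ln p] once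
    [mbar >= 8 (C+1) k^2 p' ln p]. *)

Lemma expR_le_quadratic (R : realType) (y : R) :
  0 <= y -> y <= 2^-1 -> expR y <= 1 + y + 2 * y ^+ 2.
Proof.
move=> y_ge0 y_le.
have expRy_ge0 := expR_ge0 y.
have one_sub_lt : 0 < 1 - y by lra.
have expR_Ml : expR y * (1 - y) <= 1.
  rewrite -[leRHS](expRxMexpNx_1 y) ler_wpM2l //.
  by have := expR_ge1Dx (- y); lra.
have quad_Ml : 1 <= (1 + y + 2 * y ^+ 2) * (1 - y).
  have : 0 <= y ^+ 2 * (1 - 2 * y) by rewrite mulr_ge0 ?sqr_ge0 //; lra.
  by rewrite expr2; nra.
by rewrite -(ler_pM2r one_sub_lt); apply: le_trans quad_Ml.
Qed.

Lemma card_bigmax_gt_le (R : realType) (A I : finType) (F : A -> I -> nat)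
    (l t : R) :
  (0 < #|I|)%N -> 0 <= l ->
  (#|[set a | t < (\max_i F a i)%:R]|)%:R
    <= \sum_i \sum_a expR (l * ((F a i)%:R - t)).
Proof.
move=> I_gt0 l_ge0; rewrite exchange_big -sum1_card natr_sum big_mkcond /=.
apply: ler_sum => a _; rewrite inE.
have expR_sum_ge0 (P : pred I) : 0 <= \sum_(i | P i) expR (l * ((F a i)%:R - t)).
  by apply: sumr_ge0 => i _; exact: expR_ge0.
case: ifP => // max_gt.
have [i0 max_i0] := bigop.eq_bigmax (F a) I_gt0.
rewrite (bigD1 i0) //= -[leLHS]addr0 lerD //.
have := expR_ge1Dx (l * ((F a i0)%:R - t)).
suff : 0 <= l * ((F a i0)%:R - t) by lra.
by rewrite mulr_ge0 // subr_ge0 -max_i0 ltW.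
Qed.

Lemma mgf_factor_le (R : realType) (n c : nat) (l : R) :
  (0 < n)%N -> (c <= n)%N -> 0 <= l -> 2 * l * n%:R <= 1 ->
  (n.-1)%:R + expR (l * c%:R)
    <= n%:R * expR (l * c%:R * (1 + 2 * l * n%:R) / n%:R).
Proof.
move=> n_gt0 c_le l_ge0 ln_le.
have n_gt0R : (0 : R) < n%:R by rewrite ltr0n.
have c_leR : (c%:R : R) <= n%:R by rewrite ler_nat.
have y_le_ln : l * c%:R <= l * n%:R by rewrite ler_wpM2l.
have y_ge0 : 0 <= l * c%:R by rewrite mulr_ge0.
have y_le : l * c%:R <= 2^-1 by lra.
have expR_y := expR_le_quadratic y_ge0 y_le.
have y2_le : l * c%:R * (l * c%:R) <= l * c%:R * (l * n%:R) by rewrite ler_wpM2l.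
have -> : (n.-1)%:R = n%:R - 1 :> R by rewrite -[in RHS](prednK n_gt0) -natr1 addrK.
apply: (le_trans _ (ler_wpM2l (ltW n_gt0R) (expR_ge1Dx _))).
rewrite mulrDr mulr1 mulrCA mulrA mulfK ?gt_eqF //.
by move: expR_y; rewrite expr2; nra.
Qed.

Section Loads.
Variables (p' : nat) (T : finType) (S : 'I_p' -> {set T}).

Definition multiplicity (e : T) : nat := #|[set i | e \in S i]|.

Lemma multiplicity_le e : (multiplicity e <= p')%N.
Proof. by rewrite /multiplicity -[X in (_ <= X)%N]card_ord max_card. Qed.

Lemma load_sum_multiplicity h j :
  load S h j = (\sum_e (h e == j) * multiplicity e)%N.
Proof.
rewrite /load (eq_bigr (fun i => \sum_e ((e \in S i) && (h e == j))))%N; last first.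
  by move=> i _; rewrite -sum1_card big_mkcond; apply: eq_bigr => e _; rewrite !inE.
rewrite exchange_big; apply: eq_bigr => e _.
rewrite /multiplicity -sum1_card big_distrr [RHS]big_mkcond; apply: eq_bigr => i _.
by rewrite inE /= muln1; case: (e \in S i); case: (h e == j).
Qed.

Lemma sum_multiplicity mbar :
  (forall i, #|S i| = mbar) -> (\sum_e multiplicity e = p' * mbar)%N.
Proof.
move=> card_S; rewrite /multiplicity.
rewrite (eq_bigr (fun e => \sum_(i < p') (e \in S i)))%N; last first.
  by move=> e _; rewrite -sum1_card big_mkcond; apply: eq_bigr => i _; rewrite inE.
rewrite exchange_big -[in RHS](card_ord p') -sum_nat_const; apply: eq_bigr => i _.
by rewrite -(card_S i) -sum1_card [RHS]big_mkcond.
Qed.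

Variable R : realType.

Lemma sum_expR_load (l : R) j :
  \sum_(h : {ffun T -> 'I_p'}) expR (l * (load S h j)%:R)
    = \prod_e ((p'.-1)%:R + expR (l * (multiplicity e)%:R)).
Proof.
have factorE e : (p'.-1)%:R + expR (l * (multiplicity e)%:R)
    = \sum_(i < p') expR (l * ((i == j) * multiplicity e)%N%:R).
  rewrite (bigD1 j) //= eqxx mul1n addrC; congr (_ + _).
  rewrite (eq_bigr (fun _ => 1)); last first.
    by move=> i /negbTE ->; rewrite mul0n mulr0 expR0.
  by rewrite sumr_const -[in LHS](card_ord p') -(cardC1 j).
under [RHS]eq_bigr => e _ do rewrite factorE.
rewrite bigA_distr_bigA; apply: eq_bigr => h _.
by rewrite load_sum_multiplicity natr_sum mulr_sumr expR_sum.
Qed.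

Lemma sum_expR_load_le (l : R) j mbar :
  (0 < p')%N -> 0 <= l -> 2 * l * p'%:R <= 1 -> (forall i, #|S i| = mbar) ->
  \sum_(h : {ffun T -> 'I_p'}) expR (l * (load S h j)%:R)
    <= (p' ^ #|T|)%:R * expR (l * mbar%:R * (1 + 2 * l * p'%:R)).
Proof.
move=> p'_gt0 l_ge0 lp'_le card_S; rewrite sum_expR_load.
apply: le_trans (_ : \prod_e (p'%:R * expR (l * (multiplicity e)%:R
                       * (1 + 2 * l * p'%:R) / p'%:R)) <= _).
  apply: ler_prod => e _; rewrite addr_ge0 ?expR_ge0 //=.
  exact: mgf_factor_le (multiplicity_le e) l_ge0 lp'_le.
rewrite big_split prodr_const -expR_sum natrX ler_wpM2l ?exprn_ge0 // ler_expR.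
rewrite -!mulr_suml -mulr_sumr -natr_sum (sum_multiplicity card_S) natrM.
by rewrite [p'%:R * _]mulrC mulrA mulrAC mulfK ?pnatr_eq0 -?lt0n.
Qed.

Lemma overload_prob_le (k : R) mbar :
  (0 < p')%N -> 1 <= k -> (forall i, #|S i| = mbar) ->
  overload_prob S mbar k <= p'%:R * expR (- (mbar%:R / (8 * k ^+ 2 * p'%:R))).
Proof.
move=> p'_gt0 k_ge1 card_S.
have k_gt0 : 0 < k by lra.
have p'_gt0R : (0 : R) < p'%:R by rewrite ltr0n.
pose l := (4 * k * p'%:R)^-1; pose t := mbar%:R * (1 + k^-1).
have l_ge0 : 0 <= l by rewrite invr_ge0 !mulr_ge0 // ltW.
have lp'_le : 2 * l * p'%:R <= 1.
  have -> : 2 * l * p'%:R = (2 * k)^-1 by rewrite /l; field; rewrite !gt_eqF.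
  by rewrite invf_le1 ?mulr_gt0 //; lra.
have exponentE : l * mbar%:R * (1 + 2 * l * p'%:R) - l * t
    = - (mbar%:R / (8 * k ^+ 2 * p'%:R)).
  by rewrite /l /t; field; rewrite !gt_eqF.
have load_tail_le j : \sum_(h : {ffun T -> 'I_p'}) expR (l * ((load S h j)%:R - t))
    <= (p' ^ #|T|)%:R * expR (l * mbar%:R * (1 + 2 * l * p'%:R) - l * t).
  under eq_bigr => h _ do rewrite mulrBr expRB.
  rewrite -mulr_suml expRB mulrA ler_wpM2r ?invr_ge0 ?expR_ge0 //.
  exact: sum_expR_load_le.
rewrite /overload_prob card_ffun card_ord ler_pdivrMr ?ltr0n ?expn_gt0 ?p'_gt0 //.
apply: le_trans (card_bigmax_gt_le (load S) t _ l_ge0) _; first by rewrite card_ord.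
apply: le_trans (ler_sum _ (fun j _ => load_tail_le j)) _.
by rewrite sumr_const card_ord exponentE -[_ *+ p']mulr_natl mulrCA mulrC.
Qed.

End Loads.

Theorem lemma21 (R : realType) :
  forall C : nat, exists (K : R) (P0 : nat),
  forall (p p' : nat) (T : finType) (S : 'I_p' -> {set T}) (mbar : nat) (k : R),
    (P0 <= p)%N -> (0 < p')%N -> (p' <= p)%N -> 1 <= k ->
    (forall i, #|S i| = mbar) ->
    K * k ^+ 2 * p'%:R * ln (p%:R : R) <= mbar%:R ->
    overload_prob S mbar k <= (p%:R : R) ^- C.
Proof.
move=> C; exists (8 * (C.+1)%:R), 1%N => p p' T S mbar k p_gt0 p'_gt0 p'_le k_ge1 card_S mbar_ge.
have p_gt0R : (0 : R) < p%:R by rewrite ltr0n.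
have denom_gt0 : 0 < 8 * k ^+ 2 * p'%:R by rewrite !mulr_gt0 ?exprn_gt0 ?ltr0n //; lra.
have exponent_ge : (C.+1)%:R * ln (p%:R : R) <= mbar%:R / (8 * k ^+ 2 * p'%:R).
  by rewrite ler_pdivlMr //; apply: le_trans _ mbar_ge; lra.
apply: le_trans (overload_prob_le p'_gt0 k_ge1 card_S) _.
apply: (@le_trans _ _ (p%:R * expR (- ((C.+1)%:R * ln (p%:R : R))))).
  by apply: ler_pM; rewrite ?ler_nat ?expR_ge0 ?ler_expR ?lerN2.
rewrite expRN (mulr_natl (ln _)) -lnXn // lnK ?posrE ?exprn_gt0 //.
by rewrite exprS invfM mulrA mulfV ?gt_eqF ?mul1r.
Qed.
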